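(* Let $(X,\sigma,\tau)$ be a separable, chronologically dense Lorentzian metric space satisfying the S-property. Then for all $(P,F),(P',F')\in\overline{X}$, $$\overline{\tau}((P,F),(P',F'))>0\iff F\cap P'\neq\emptyset.$$
   Context: A Lorentzian metric space $(X,\sigma,\tau)$ is a topological space with $\tau:X\times X\to[0,\infty]$ lower semicontinuous and satisfying $\tau(x,z)\geq\tau(x,y)+\tau(y,z)$ whenever $\tau(x,y),\tau(y,z)>0$. Write $x\ll y$ iff $\tau(x,y)>0$, $I^+(x)=\{y:x\ll y\}$, $I^-(x)=\{y:y\ll x\}$, $I^\pm[A]=\bigcup_{a\in A}I^\pm(a)$. Future (resp. past) chain: $x_n\ll x_{n+1}$ (resp. $x_{n+1}\ll x_n$) for all $n$. Separable: there is a countable $S$ with $x\ll y\Rightarrow\exists s\in S$, $x\ll s\ll y$. Chronologically dense: every $x$ with $I^-(x)\neq\emptyset$ (resp. $I^+(x)\neq\emptyset$) is the $\sigma$-limit of a future (resp. past) chain. Past set: $P=I^-[P]$; $\downarrow S=I^-[\{p:p\ll q\ \forall q\in S\}]$; IP: past set not the union of two proper past subsets; PIP: IP of the form $I^-(p)$; future sets, $\uparrow S$, IF, PIF dually. For nonempty IP $P$ and IF $F$, $P\sim_S F$ iff $P$ is a maximal IP in $\downarrow F$ and $F$ a maximal IF in $\uparrow P$; $P\sim_S\emptyset$ (resp. $\emptyset\sim_S F$) if the nonempty $P$ (resp. $F$) is S-related to no nonempty IF (resp. IP). S-property: for every $x$, $I^-(x)\sim_S I^+(x)$, and no PIF other than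 $I^+(x)$ (resp. PIP other than $I^-(x)$) is S-related to $I^-(x)$ (resp. $I^+(x)$). c-completion $\overline X=\{(P,F):P\sim_S F\}$. $\overline\tau((P,F),(P',F'))=0$ if $F=\emptyset$ or $P'=\emptyset$, and otherwise $\lim_n\tau(q_n,p'_n)$ for any past chain $\{q_n\}$ with $I^+[\{q_n\}]=F$ and any future chain $\{p'_n\}$ with $I^-[\{p'_n\}]=P'$ (well defined). *)

From HB Require Import structures.
From mathcomp Require Import all_boot all_order all_algebra.
From mathcomp Require Import all_classical all_reals all_analysis.
Set Implicit Arguments. Unset Strict Implicit. Unset Printing Implicit Defensive.
Import Order.TTheory GRing.Theory Num.Theory.
Local Open Scope classical_set_scope.
Local Open Scope ereal_scope.

Section LMS.
Context {R : realType} {T : topologicalType} (tau : T -> T -> \bar R).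

Definition lorentzian_metric : Prop :=
  (forall x y, 0 <= tau x y) /\
  lower_semicontinuous (fun xy : T * T => tau xy.1 xy.2) /\
  (forall x y z, 0 < tau x y -> 0 < tau y z -> tau x y + tau y z <= tau x z).

Definition chron (x y : T) : Prop := 0 < tau x y.

Definition Ifut (x : T) : set T := [set y | chron x y].
Definition Ipast (x : T) : set T := [set y | chron y x].
Definition Ifut_set (A : set T) : set T := [set y | exists2 a, A a & chron a y].
Definition Ipast_set (A : set T) : set T := [set y | exists2 a, A a & chron y a].

Definition future_chain (s : nat -> T) : Prop := forall n, chron (s n) (s n.+1).
Definition past_chain (s : nat -> T) : Prop := forall n, chron (s n.+1) (s n).

Definition separable_LMS : Prop :=
  exists S : set T, countable S /\
    forall x y, chron x y -> exists2 s, S s & chron x s /\ chron s y.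

Definition chron_dense : Prop :=
  (forall x, Ipast x !=set0 ->
     exists s : nat -> T, future_chain s /\ (s @ \oo --> x)) /\
  (forall x, Ifut x !=set0 ->
     exists s : nat -> T, past_chain s /\ (s @ \oo --> x)).

Definition past_set (P : set T) : Prop := P = Ipast_set P.
Definition future_set (F : set T) : Prop := F = Ifut_set F.

Definition down (S : set T) : set T :=
  Ipast_set [set p | forall q, S q -> chron p q].
Definition up (S : set T) : set T :=
  Ifut_set [set p | forall q, S q -> chron q p].

Definition IP (P : set T) : Prop :=
  P !=set0 /\ past_set P /\
  ~ (exists P1 P2, past_set P1 /\ past_set P2 /\ P1 `<` P /\ P2 `<` P /\
                   P = P1 `|` P2).
Definition IF (F : set T) : Prop :=
  F !=set0 /\ future_set F /\
  ~ (exists F1 F2, future_set F1 /\ future_set F2 /\ F1 `<` F /\ F2 `<` F /\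
                   F = F1 `|` F2).

Definition PIP (P : set T) : Prop := IP P /\ exists p, P = Ipast p.
Definition PIF (F : set T) : Prop := IF F /\ exists p, F = Ifut p.

Definition maximal_IP_in (P A : set T) : Prop :=
  IP P /\ P `<=` A /\ forall P', IP P' -> P `<=` P' -> P' `<=` A -> P' = P.
Definition maximal_IF_in (F A : set T) : Prop :=
  IF F /\ F `<=` A /\ forall F', IF F' -> F `<=` F' -> F' `<=` A -> F' = F.

Definition Srel_ne (P F : set T) : Prop :=
  maximal_IP_in P (down F) /\ maximal_IF_in F (up P).

Definition Srel (P F : set T) : Prop :=
  Srel_ne P F \/
  (F = set0 /\ IP P /\ forall F', IF F' -> ~ Srel_ne P F') \/
  (P = set0 /\ IF F /\ forall P', IP P' -> ~ Srel_ne P' F).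

Definition S_property : Prop :=
  forall x, Srel (Ipast x) (Ifut x) /\
    (forall y, PIF (Ifut y) -> Srel (Ipast x) (Ifut y) -> Ifut y = Ifut x) /\
    (forall y, PIP (Ipast y) -> Srel (Ipast y) (Ifut x) -> Ipast y = Ipast x).

Definition c_completion (PF : set T * set T) : Prop := Srel PF.1 PF.2.

Definition taubar_chains (F P' : set T) (qp : (nat -> T) * (nat -> T)) : Prop :=
  past_chain qp.1 /\ Ifut_set (range qp.1) = F /\
  future_chain qp.2 /\ Ipast_set (range qp.2) = P'.

Definition taubar (PF PF' : set T * set T) : \bar R :=
  match pselect (PF.2 = set0 \/ PF'.1 = set0) with
  | left _ => 0
  | right _ =>
    match pselect (exists qp, taubar_chains PF.2 PF'.1 qp) with
    | left h => let qp := projT1 (cid h) in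
                limn (fun n => tau (qp.1 n) (qp.2 n))
    | right _ => 0
    end
  end.

End LMS.

(* Separability makes every IP the past of a future chain: enumerate the
   countably many points of a dense set lying in the IP and climb above them
   one after the other, which is possible because an IP is directed (otherwise
   it would split into the pasts of the points not above x and not above y).
   Dually every IF is the future of a past chain.  For a past chain q
   generating F and a future chain p generating P', the reverse triangle
   inequality makes tau (q n) (p n) nondecreasing, so its limit is positive iff
   some q n << p n, i.e. iff F and P' meet. *)

From HB Require Import structures.
From mathcomp Require Import all_boot all_order all_algebra.
From mathcomp Require Import all_classical all_reals all_analysis.
Set Implicit Arguments. Unset Strict Implicit. Unset Printing Implicit Defensive.
Import Order.TTheory GRing.Theory Num.Theory.
Local Open Scope classical_set_scope.
Local Open Scope ereal_scope.

Lemma countable_range_enum (T : Type) (A : set T) :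
  countable A -> A !=set0 -> exists e : nat -> T, A = range e.
Proof. by move=> /pfcard_geP[-> /set0P/eqP//|/surjfunPex[e ->]]; exists e. Qed.

Lemma nondecreasing_limn_gtP (R : realType) (u : (\bar R)^nat) (x : \bar R) :
  nondecreasing_seq u -> x < limn u <-> exists n, x < u n.
Proof.
move=> u_nd; rewrite (cvg_lim _ (ereal_nondecreasing_cvgn u_nd)) //.
split=> [/ereal_sup_gt[_ [n _ <-]] ?|[n xun]]; first by exists n.
by apply: lt_le_trans xun _; apply: ereal_sup_ubound; exists n.
Qed.

Section DirectedChain.
Variables (T : Type) (r : T -> T -> Prop) (P : set T).
Hypothesis P_directed : forall x y, P x -> P y -> exists z, [/\ P z, r x z & r y z].

Lemma directed_chain_above (e : nat -> T) : (forall n, P (e n)) ->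
  exists q : nat -> T, (forall n, r (q n) (q n.+1)) /\
                       (forall n, P (q n) /\ r (e n) (q n)).
Proof.
move=> Pe.
have /choice[ub ubP] : forall xy : T * T, exists z, P xy.1 -> P xy.2 ->
    [/\ P z, r xy.1 z & r xy.2 z].
  move=> [x y]; have [[Px Py]|] := pselect (P x /\ P y).
    by have [z ?] := P_directed Px Py; exists z.
  by move=> nPxy; exists x => Px Py; case: nPxy.
pose fix q n := if n is m.+1 then ub (q m, e m.+1) else ub (e 0%N, e 0%N).
have qP n : P (q n) /\ r (e n) (q n).
  elim: n => [|n [Pqn _]]; first by case: (ubP (e 0%N, e 0%N) (Pe 0%N) (Pe 0%N)).
  by case: (ubP (q n, e n.+1) Pqn (Pe n.+1)).
exists q; split=> // n.
by case: (ubP (q n, e n.+1) (qP n).1 (Pe n.+1)).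
Qed.

End DirectedChain.

Section TimeReversal.
Context {R : realType} {T : topologicalType}.
Implicit Types (tau : T -> T -> \bar R) (S : set T).

Definition reverse_triangle tau : Prop :=
  forall x y z, 0 < tau x y -> 0 < tau y z -> tau x y + tau y z <= tau x z.

Definition interpolates tau S : Prop :=
  forall x y, chron tau x y -> exists2 s, S s & chron tau x s /\ chron tau s y.

Definition time_reverse tau : T -> T -> \bar R := fun x y => tau y x.

Lemma reverse_triangle_time_reverse tau :
  reverse_triangle tau -> reverse_triangle (time_reverse tau).
Proof. by move=> tri x y z xy yz; rewrite /time_reverse addeC; apply: tri. Qed.

Lemma interpolates_time_reverse tau S :
  interpolates tau S -> interpolates (time_reverse tau) S.
Proof. by move=> interp x y /interp[s Ss [? ?]]; exists s. Qed.

End TimeReversal.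

Section Chronology.
Context {R : realType} {T : topologicalType} (tau : T -> T -> \bar R).

Lemma Srel_IF P F : Srel tau P F -> F !=set0 -> IF tau F.
Proof. by case=> [[_ []] | [[-> _ []] | [_ []]]]. Qed.

Lemma Srel_IP P F : Srel tau P F -> P !=set0 -> IP tau P.
Proof. by case=> [[[]] | [[_ []] | [-> _ []]]]. Qed.

Hypothesis tri : reverse_triangle tau.

Lemma chron_trans x y z : chron tau x y -> chron tau y z -> chron tau x z.
Proof. by rewrite /chron => xy yz; apply: lt_le_trans (tri xy yz); apply: adde_gt0. Qed.

Lemma future_chain_chron_le s j m y : future_chain tau s -> (j <= m)%N ->
  chron tau y (s j) -> chron tau y (s m).
Proof.
move=> s_chain; rewrite leq_eqVlt => /predU1P[<-//|lt_jm] yj.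
apply: chron_trans yj _; apply: (homo_ltn _ s_chain) lt_jm.
by move=> ? ? ?; apply: chron_trans.
Qed.

Lemma past_chain_chron_le s i m y : past_chain tau s -> (i <= m)%N ->
  chron tau (s i) y -> chron tau (s m) y.
Proof.
move=> s_chain; rewrite leq_eqVlt => /predU1P[<-//|lt_im].
apply: chron_trans; apply: (homo_ltn (r := fun a b => chron tau b a) _ s_chain) lt_im.
by move=> ? ? ? xy yz; apply: chron_trans yz xy.
Qed.

Section Interpolation.
Variable S : set T.
Hypothesis S_countable : countable S.
Hypothesis S_interpolates : interpolates tau S.

Lemma past_set_Ipast_set A : past_set tau (Ipast_set tau A).
Proof.
apply/seteqP; split=> [w [a Aa wa]|w [u [a Aa ua] wu]].
  by have [s _ [ws sa]] := S_interpolates wa; exists s => //; exists a.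
by exists a => //; apply: chron_trans wu ua.
Qed.

Lemma IP_directed P : IP tau P -> forall x y, P x -> P y ->
  exists z, [/\ P z, chron tau x z & chron tau y z].
Proof.
move=> [_ [P_past P_indec]] x y Px Py; apply: contrapT => no_ub; apply: P_indec.
have Ipast_sub A : A `<=` P -> Ipast_set tau A `<=` P.
  by move=> AP w [a /AP Pa wa]; rewrite P_past; exists a.
have proper z : P z -> Ipast_set tau (P `\` Ifut tau z) `<` P.
  move=> Pz; split; first by apply: Ipast_sub => ? [].
  by move=> /(_ z Pz)[a [_ ?] ?].
exists (Ipast_set tau (P `\` Ifut tau x)), (Ipast_set tau (P `\` Ifut tau y)).
do 2 (split; first exact: past_set_Ipast_set).
split; first exact: proper. split; first exact: proper.
apply/seteqP; split=> [w|]; last by move=> w []; apply: Ipast_sub => ? [].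
rewrite {1}P_past => -[v Pv wv].
have [xv|] := pselect (chron tau x v); last by left; exists v.
have [yv|] := pselect (chron tau y v); last by right; exists v.
by case: no_ub; exists v.
Qed.

Lemma IP_future_chain P : IP tau P ->
  exists s, future_chain tau s /\ Ipast_set tau (range s) = P.
Proof.
move=> P_IP; have [[w0 Pw0] [P_past _]] := P_IP.
have PS_cofinal w : P w -> exists2 s, (P `&` S) s & chron tau w s.
  rewrite {1}P_past => -[v Pv /S_interpolates[s Ss [ws sv]]].
  by exists s => //; split=> //; rewrite P_past; exists v.
have [e PSe] : exists e : nat -> T, P `&` S = range e.
  apply: countable_range_enum.
    exact: sub_countable (subset_card_le (@subIsetr _ P S)) S_countable.
  by have [s ? _] := PS_cofinal w0 Pw0; exists s.
have Pe n : P (e n) by have [] : (P `&` S) (e n) by rewrite PSe; exists n.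
have [q [q_chain qP]] := directed_chain_above (IP_directed P_IP) Pe.
exists q; split=> //; apply/seteqP; split.
  by move=> w [_ [n _ <-] wq]; rewrite P_past; exists (q n) => //; case: (qP n).
move=> w /PS_cofinal[s]; rewrite PSe => -[n _ <-] wen.
by exists (q n); [exists n | apply: chron_trans wen (qP n).2].
Qed.

End Interpolation.

Lemma chains_meetP q p : past_chain tau q -> future_chain tau p ->
  (exists n, chron tau (q n) (p n)) <->
  Ifut_set tau (range q) `&` Ipast_set tau (range p) !=set0.
Proof.
move=> q_chain p_chain; split=> [[n qp]|[x [[_ [i _ <-] qx] [_ [j _ <-] xp]]]].
  exists (q n); split; first by exists (q n.+1) => //; exists n.+1.
  by exists (p n) => //; exists n.
exists (maxn i j); apply: past_chain_chron_le q_chain (leq_maxl i j) _.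
exact: future_chain_chron_le p_chain (leq_maxr i j) (chron_trans qx xp).
Qed.

Hypothesis tau_ge0 : forall x y, 0 <= tau x y.

Lemma chain_gap_nondecreasing q p : past_chain tau q -> future_chain tau p ->
  nondecreasing_seq (fun n => tau (q n) (p n)).
Proof.
move=> q_chain p_chain; apply/nondecreasing_seqP => n.
(* q n.+1 << q n << p n << p n.+1, and each step only increases tau. *)
have [gap_le0|gap_gt0] := leP (tau (q n) (p n)) 0; first exact: le_trans gap_le0 _.
have qp_next := chron_trans (q_chain n) gap_gt0.
apply: le_trans (tri qp_next (p_chain n)); apply: le_trans (leeDl _ _) => //.
exact: le_trans (leeDr _ _) (tri (q_chain n) gap_gt0).
Qed.

Lemma taubar_gt0P PF PF' :
  (PF.2 !=set0 -> PF'.1 !=set0 -> exists qp, taubar_chains tau PF.2 PF'.1 qp) ->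
  0 < taubar tau PF PF' <-> PF.2 `&` PF'.1 !=set0.
Proof.
move=> chains_exist; rewrite /taubar; case: pselect => [empty|/not_orP[]].
  split=> [|[x [Fx P'x]]]; first by rewrite ltxx.
  by case: empty => E; [move: Fx | move: P'x]; rewrite E.
move=> /eqP/set0P F_ne0 /eqP/set0P P'_ne0; case: pselect => [h|]; last first.
  by case; apply: chains_exist.
case: (cid h) => -[q p] [/= q_chain [<- [p_chain <-]]].
rewrite nondecreasing_limn_gtP; last exact: chain_gap_nondecreasing.
exact: chains_meetP.
Qed.

End Chronology.

Lemma IF_past_chain {R : realType} {T : topologicalType} (tau : T -> T -> \bar R)
    (S : set T) F :
  reverse_triangle tau -> countable S -> interpolates tau S -> IF tau F ->
  exists s, past_chain tau s /\ Ifut_set tau (range s) = F.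
Proof.
(* An IF of tau is an IP of its time reversal, and a past chain a future one. *)
move=> tri S_countable S_interpolates.
exact: (IP_future_chain (reverse_triangle_time_reverse tri) S_countable
                        (interpolates_time_reverse S_interpolates)).
Qed.

Unset Implicit Arguments.

Theorem mainTheorem16 (R : realType) (T : topologicalType) (tau : T -> T -> \bar R) :
  lorentzian_metric tau -> separable_LMS tau -> chron_dense tau -> S_property tau ->
  forall PF PF' : set T * set T,
    c_completion tau PF -> c_completion tau PF' ->
    (0 < taubar tau PF PF' <-> PF.2 `&` PF'.1 !=set0).
Proof.
move=> [tau_ge0 [_ tri]] [S [S_countable S_interpolates]] _ _ PF PF' PF_Srel PF'_Srel.
apply: taubar_gt0P => // F_ne0 P'_ne0.
have [q [q_chain qF]] :=
  IF_past_chain tri S_countable S_interpolates (Srel_IF PF_Srel F_ne0).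
have [p [p_chain pP']] :=
  IP_future_chain tri S_countable S_interpolates (Srel_IP PF'_Srel P'_ne0).
by exists (q, p).
Qed.
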